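(* For every finite modal signature and all $q,\ell\in\mathbb{N}$ there is $c\in\mathbb{N}$ such that for any two pointed Kripke structures $\mathcal{M},w$ and $\mathcal{M}',w'$ over this signature for which $\mathcal{M}\restriction N^\ell(w),w$ and $\mathcal{M}'\restriction N^\ell(w'),w'$ are rooted tree-like: $$\mathcal{M}\restriction N^\ell(w),w\ \sim_{\mathrm{C}}^{c,\ell}\ \mathcal{M}'\restriction N^\ell(w'),w' \;\Longrightarrow\; \mathcal{M}\restriction N^\ell(w),w\ \equiv^{\mathrm{FO}_q}\ \mathcal{M}'\restriction N^\ell(w'),w'.$$ Consequently any first-order formula $\varphi(x)$ of quantifier rank at most $q$ has the same truth value at $w$ in $\mathcal{M}\restriction N^\ell(w)$ as at $w'$ in $\mathcal{M}'\restriction N^\ell(w')$.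
   Context: A finite modal signature consists of a finite set $I$ of agents and a finite set $J$ of basic propositions. A Kripke structure is $\mathcal{M}=(W,(E_i)_{i\in I},(P_j)_{j\in J})$ with $W\neq\emptyset$, $E_i\subseteq W\times W$, $P_j\subseteq W$, viewed as a relational structure; $E_i[u]=\{v:(u,v)\in E_i\}$. $\mathrm{FO}_q$ is the set of first-order formulae of quantifier rank $\le q$, and $\mathcal{M},w\equiv^{\mathrm{FO}_q}\mathcal{M}',w'$ means every $\varphi(x)\in\mathrm{FO}_q$ holds at $w$ in $\mathcal{M}$ iff it holds at $w'$ in $\mathcal{M}'$. The $\ell$-neighbourhood $N^\ell(w)$ is the set of worlds at distance $\le\ell$ from $w$ in the undirected graph given by the union of the symmetrisations of all $E_i$; $\mathcal{M}\restriction N^\ell(w)$ is the induced substructure. $\mathcal{M}\restriction N^\ell(w),w$ is rooted tree-like if, within $N^\ell(w)$, the symmetrisations of the $E_i$ are pairwise disjoint, their union is acyclic, and every $E_i$-edge is directed away from the root $w$. The $c$-graded $\ell$-round game on $\mathcal{M},\mathcal{M}'$ from $(w,w')$: positions are pairs $(u,u')\in W\times W'$. In each round from $(u,u')$, player I chooses an agent $i$ and a non-empty subset $s$ of $E_i[u]$ or of $E_i'[u']$ of size at most $c$; player II must respond with a subset $s'$ of the same size of the corresponding set on the other side; then I picks a world in $s'$ and II answers by picking a world in $s$; the pair of these two worlds is the new position. A player unable to move loses; II also loses as soon as a position $(v,v')$ (including the initial one) violates atom equivalence ($v\in P_j\not\Leftrightarrow v'\in P'_j$ for some $j$). $\mathcal{M},w\sim_{\mathrm{C}}^{c,\ell}\mathcal{M}',w'$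 means II has a winning strategy for the $\ell$ rounds of this game from $(w,w')$. *)

From Stdlib Require Import List Arith PeanoNat FinFun.
Import ListNotations.
Set Implicit Arguments.

Section Kripke.
Variables I J : Type.

Record Kripke := {
  world : Type;
  world_ne : inhabited world;
  rel : I -> world -> world -> Prop;
  prp : J -> world -> Prop
}.

Definition adj (M : Kripke) (u v : world M) : Prop :=
  exists i, rel M i u v \/ rel M i v u.

Fixpoint within (M : Kripke) (n : nat) (u v : world M) : Prop :=
  match n with
  | 0 => u = v
  | S m => u = v \/ exists z, adj M u z /\ within M m z v
  end.

Lemma within_refl (M : Kripke) n (u : world M) : within M n u u.
Proof. destruct n; simpl; auto. Qed.

Definition restrict (M : Kripke) (l : nat) (w : world M) : Kripke := {|
  world := { v : world M | within M l w v };
  world_ne := inhabits (exist _ w (within_refl M l w));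
  rel := fun i u v => rel M i (proj1_sig u) (proj1_sig v);
  prp := fun j u => prp M j (proj1_sig u)
|}.

Definition root (M : Kripke) (l : nat) (w : world M) : world (restrict M l w) :=
  exist _ w (within_refl M l w).

Definition dist_is (M : Kripke) (n : nat) (r v : world M) : Prop :=
  within M n r v /\ forall m, m < n -> ~ within M m r v.

Fixpoint chain (M : Kripke) (l : list (world M)) : Prop :=
  match l with
  | x :: ((y :: _) as t) => adj M x y /\ chain M t
  | _ => True
  end.

Definition acyclic (M : Kripke) : Prop :=
  (forall u, ~ adj M u u) /\
  (forall (l : list (world M)) (x y : world M),
      NoDup l -> 3 <= length l -> chain M l ->
      hd_error l = Some x -> last l x = y -> ~ adj M y x).

Definition rooted_tree_like {M : Kripke} (r : world M) : Prop :=
  (forall i j u v, i <> j ->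
     (rel M i u v \/ rel M i v u) -> (rel M j u v \/ rel M j v u) -> False) /\
  acyclic M /\
  (forall i u v, rel M i u v ->
     exists n, dist_is M n r u /\ dist_is M (S n) r v).

(** The c-graded game: [winII M M' c n u u'] means II has a winning strategy
    for n rounds from position (u,u').  Subsets of size k are duplicate-free
    lists of length k. *)
Definition subset_of (M : Kripke) (i : I) (u : world M) (s : list (world M)) :=
  NoDup s /\ forall v, In v s -> rel M i u v.

Definition atom_eq (M M' : Kripke) (u : world M) (u' : world M') : Prop :=
  forall j, prp M j u <-> prp M' j u'.

Fixpoint winII (M M' : Kripke) (c n : nat) (u : world M) (u' : world M') : Prop :=
  atom_eq M M' u u' /\
  match n with
  | 0 => True
  | S m =>
    forall i,
      (forall s, subset_of M i u s -> 1 <= length s <= c ->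
         exists s', subset_of M' i u' s' /\ length s' = length s /\
           forall v', In v' s' -> exists v, In v s /\ winII M M' c m v v') /\
      (forall s', subset_of M' i u' s' -> 1 <= length s' <= c ->
         exists s, subset_of M i u s /\ length s = length s' /\
           forall v, In v s -> exists v', In v' s' /\ winII M M' c m v v')
  end.

Definition game_equiv (c l : nat) {M : Kripke} (w : world M)
  {M' : Kripke} (w' : world M') : Prop := winII M M' c l w w'.

(** First-order logic over the signature {E_i (binary), P_j (unary), =}.
    Variables are natural numbers; the distinguished free variable x is 0. *)
Inductive fo : Type :=
| FEq : nat -> nat -> fo
| FRel : I -> nat -> nat -> fo
| FPrp : J -> nat -> fo
| FFalse : fo
| FNot : fo -> fo
| FAnd : fo -> fo -> fo
| FOr : fo -> fo -> fo
| FImp : fo -> fo -> fo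
| FEx : nat -> fo -> fo
| FAll : nat -> fo -> fo.

Fixpoint qrank (f : fo) : nat :=
  match f with
  | FEq _ _ | FRel _ _ _ | FPrp _ _ | FFalse => 0
  | FNot g => qrank g
  | FAnd g h | FOr g h | FImp g h => Nat.max (qrank g) (qrank h)
  | FEx _ g | FAll _ g => S (qrank g)
  end.

Fixpoint free_in (y : nat) (f : fo) : Prop :=
  match f with
  | FEq a b => y = a \/ y = b
  | FRel _ a b => y = a \/ y = b
  | FPrp _ a => y = a
  | FFalse => False
  | FNot g => free_in y g
  | FAnd g h | FOr g h | FImp g h => free_in y g \/ free_in y h
  | FEx x g | FAll x g => y <> x /\ free_in y g
  end.

Definition upd (W : Type) (rho : nat -> W) (x : nat) (a : W) : nat -> W :=
  fun y => if Nat.eqb y x then a else rho y.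

Fixpoint sat (M : Kripke) (rho : nat -> world M) (f : fo) : Prop :=
  match f with
  | FEq a b => rho a = rho b
  | FRel i a b => rel M i (rho a) (rho b)
  | FPrp j a => prp M j (rho a)
  | FFalse => False
  | FNot g => ~ sat M rho g
  | FAnd g h => sat M rho g /\ sat M rho h
  | FOr g h => sat M rho g \/ sat M rho h
  | FImp g h => sat M rho g -> sat M rho h
  | FEx x g => exists a, sat M (upd rho x a) g
  | FAll x g => forall a, sat M (upd rho x a) g
  end.

Definition fo_equiv (q : nat) {M : Kripke} (w : world M)
  {M' : Kripke} (w' : world M') : Prop :=
  forall f, qrank f <= q -> (forall y, free_in y f -> y = 0) ->
    (sat M (fun _ => w) f <-> sat M' (fun _ => w') f).

End Kripke.

(* Restricted to N^l, both structures are trees of height at most l, and II's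
   winning strategy is turned into a back-and-forth system.  Its positions are
   partial isomorphisms R between the trees, closed under parents; a matched
   pair at depth d is won by II for l - d rounds, and for every agent i and
   every class of the (l - d - 1)-round game the two vertices have equally many
   unmatched i-children in that class, counted up to a cap t.  One round of the
   c-graded game provides such counts for t <= c.  A new vertex at depth d is
   matched by walking down from the root one child at a time, each step lowering
   the cap by one, so a quantifier costs at most l and c = q * l suffices. *)

From Stdlib Require Import List Arith FinFun Lia Program.Basics.
From Stdlib Require Import Classical FunctionalExtensionality PropExtensionality ProofIrrelevance.
Import ListNotations.

Section Game.
Context {I J : Type}.
Implicit Types A B C : Kripke I J.

Lemma winII_atom_eq A B c n x y : winII A B c n x y -> atom_eq A B x y.
Proof. destruct n; simpl; tauto. Qed.

Lemma winII_refl A c n : forall x, winII A A c n x x.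
Proof.
  induction n as [|n IH]; intro x; split; try (intro j; reflexivity); [exact Logic.I|].
  intro i; split; intros s Hs _; exists s; repeat split; try apply Hs;
    intros v Hv; exists v; auto.
Qed.

Lemma winII_sym A B c n : forall x y, winII A B c n x y -> winII B A c n y x.
Proof.
  induction n as [|n IH]; intros x y [Hat H]; split; try (intro j; symmetry; apply Hat);
    [exact Logic.I|].
  intro i; destruct (H i) as [Hforth Hback]; split; intros s Hs Hlen.
  - destruct (Hback s Hs Hlen) as (s' & Hs' & Hl & Hm).
    exists s'; split; [exact Hs'|split; [exact Hl|]].
    intros v Hv; destruct (Hm v Hv) as (u & Hu & Hw); exists u; auto.
  - destruct (Hforth s Hs Hlen) as (s' & Hs' & Hl & Hm).
    exists s'; split; [exact Hs'|split; [exact Hl|]].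
    intros v Hv; destruct (Hm v Hv) as (u & Hu & Hw); exists u; auto.
Qed.

Lemma winII_trans A B C c n :
  forall x y z, winII A B c n x y -> winII B C c n y z -> winII A C c n x z.
Proof.
  induction n as [|n IH]; intros x y z [Hxy H] [Hyz H'];
    split; try (intro j; rewrite (Hxy j); apply Hyz); [exact Logic.I|].
  intro i; destruct (H i) as [H1 H2]; destruct (H' i) as [H1' H2']; split.
  - intros s Hs Hl. destruct (H1 s Hs Hl) as (s1 & Hs1 & Hl1 & Hm1).
    destruct (H1' s1 Hs1 ltac:(rewrite Hl1; exact Hl)) as (s2 & Hs2 & Hl2 & Hm2).
    exists s2; split; [exact Hs2|split; [congruence|]].
    intros v2 Hv2. destruct (Hm2 v2 Hv2) as (v1 & Hv1 & Hw1).
    destruct (Hm1 v1 Hv1) as (v & Hv & Hw). eauto.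
  - intros s Hs Hl. destruct (H2' s Hs Hl) as (s1 & Hs1 & Hl1 & Hm1).
    destruct (H2 s1 Hs1 ltac:(rewrite Hl1; exact Hl)) as (s2 & Hs2 & Hl2 & Hm2).
    exists s2; split; [exact Hs2|split; [congruence|]].
    intros v2 Hv2. destruct (Hm2 v2 Hv2) as (v1 & Hv1 & Hw1).
    destruct (Hm1 v1 Hv1) as (v & Hv & Hw). eauto.
Qed.

End Game.

Arguments winII_atom_eq {I J A B c n x y}.
Arguments winII_sym {I J A B c n x y}.
Arguments winII_trans {I J A B C c n x y z}.

Definition at_least {W : Type} (P : W -> Prop) (m : nat) : Prop :=
  exists s, NoDup s /\ length s = m /\ forall v, In v s -> P v.

Section AtLeast.
Context {W : Type}.
Implicit Types P Q : W -> Prop.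

Lemma at_least_0 P : at_least P 0.
Proof. exists []; repeat split; [constructor|intros v []]. Qed.

Lemma at_least_iff P Q m : (forall u, P u <-> Q u) -> (at_least P m <-> at_least Q m).
Proof.
  intro H; split; intros (s & Hs & Hl & HP); exists s; repeat split; auto;
    intros v Hv; apply H; auto.
Qed.

Lemma at_least_S P z m : P z -> (at_least (fun u => P u /\ u <> z) m <-> at_least P (S m)).
Proof.
  intro Pz; split.
  - intros (s & Hs & Hl & HP). exists (z :: s); repeat split.
    + constructor; [intro Hz; exact (proj2 (HP z Hz) eq_refl)|exact Hs].
    + simpl; congruence.
    + intros v [<-|Hv]; [exact Pz|apply HP; exact Hv].
  - intros (s & Hs & Hl & HP). destruct (classic (In z s)) as [Hz|Hz].
    + destruct (in_split _ _ Hz) as (s1 & s2 & ->).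
      exists (s1 ++ s2); split; [exact (NoDup_remove_1 _ _ _ Hs)|split].
      * rewrite length_app in *; simpl in Hl; lia.
      * intros v Hv; split.
        -- apply HP; apply in_app_or in Hv; apply in_or_app; simpl; tauto.
        -- intros ->; exact (NoDup_remove_2 _ _ _ Hs Hv).
    + destruct s as [|x s]; [discriminate|].
      exists s; split; [inversion Hs; assumption|split; [simpl in Hl; congruence|]].
      intros v Hv; split; [apply HP; simpl; auto|intros ->; apply Hz; simpl; auto].
Qed.

Lemma at_least_without P z m : ~ P z -> (at_least (fun u => P u /\ u <> z) m <-> at_least P m).
Proof.
  intro Pz; apply at_least_iff; intro u; split; [tauto|].
  intro Pu; split; [exact Pu|intros ->; contradiction].
Qed.

End AtLeast.

(* Counting successors up to c inside a class of the n-round game is exactly what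
   one round of the c-graded game transfers; the class is represented by a world
   w of A, and transitivity of winII keeps responses inside it. *)
Lemma winII_child_count {I J} {A B : Kripke I J} c n x y i m (w : world A) :
  winII A B c (S n) x y -> m <= c ->
  (at_least (fun u => rel A i x u /\ winII A A c n w u) m <->
   at_least (fun u' => rel B i y u' /\ winII A B c n w u') m).
Proof.
  intros [_ H] Hm. destruct (H i) as [Hforth Hback]. destruct m as [|m].
  { split; intros; apply at_least_0. }
  split; intros (s & Hs & Hl & HP).
  - destruct (Hforth s) as (s' & [Hs' Hr'] & Hl' & Hresp);
      [split; [exact Hs|intros v Hv; apply HP, Hv]|lia|].
    exists s'; split; [exact Hs'|split; [congruence|]].
    intros v Hv; split; [apply Hr', Hv|].
    destruct (Hresp v Hv) as (u & Hu & Hw). exact (winII_trans (proj2 (HP u Hu)) Hw).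
  - destruct (Hback s) as (s' & [Hs' Hr'] & Hl' & Hresp);
      [split; [exact Hs|intros v Hv; apply HP, Hv]|lia|].
    exists s'; split; [exact Hs'|split; [congruence|]].
    intros v Hv; split; [apply Hr', Hv|].
    destruct (Hresp v Hv) as (u & Hu & Hw).
    exact (winII_trans (proj2 (HP u Hu)) (winII_sym Hw)).
Qed.

Section Distance.
Context {I J : Type} (A : Kripke I J).

Lemma within_snoc k : forall u v z : world A, within A k u v -> adj A v z -> within A (S k) u z.
Proof.
  induction k as [|k IH]; simpl; intros u v z H Hz.
  - subst v; right; exists z; auto.
  - destruct H as [<-|(y & Hy & Hw)]; right.
    + exists z; split; [exact Hz|apply (within_refl A (S k))].
    + exists y; split; [exact Hy|exact (IH y v z Hw Hz)].
Qed.

Lemma within_S_inv k : forall u v : world A, within A (S k) u v ->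
  u = v \/ exists y, within A k u y /\ adj A y v.
Proof.
  induction k as [|k IH]; simpl; intros u v H;
    destruct H as [H|(z & Hz & Hw)]; auto.
  - subst z; right; exists u; auto.
  - destruct (IH z v Hw) as [<-|(y & Hy & Hyv)]; right.
    + exists u; split; [apply (within_refl A (S k))|exact Hz].
    + exists y; split; [simpl; right; exists z; auto|exact Hyv].
Qed.

Lemma within_S k : forall u v : world A, within A k u v -> within A (S k) u v.
Proof.
  induction k as [|k IH]; intros u v H; [left; exact H|].
  destruct H as [H|(z & Hz & Hw)]; [left; exact H|].
  right; exists z; split; [exact Hz|exact (IH z v Hw)].
Qed.

Lemma within_mono k k' (u v : world A) : k <= k' -> within A k u v -> within A k' u v.
Proof. induction 1; auto using within_S. Qed.

Lemma dist_is_unique n m (r v : world A) : dist_is A n r v -> dist_is A m r v -> n = m.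
Proof.
  intros [Hn Hn'] [Hm Hm'].
  destruct (Nat.lt_trichotomy n m) as [H|[H|H]];
    [exfalso; exact (Hm' n H Hn)|exact H|exfalso; exact (Hn' m H Hm)].
Qed.

Lemma dist_is_refl (r : world A) : dist_is A 0 r r.
Proof. split; [reflexivity|intros m Hm; lia]. Qed.

Lemma within_dist_is n (r v : world A) : within A n r v -> exists d, d <= n /\ dist_is A d r v.
Proof.
  induction n as [n IH] using lt_wf_ind; intro H.
  destruct (classic (exists m, m < n /\ within A m r v)) as [(m & Hm & Hw)|Hmin].
  - destruct (IH m Hm Hw) as (d & Hd & Hdist). exists d; split; [lia|exact Hdist].
  - exists n; split; [lia|split; [exact H|]].
    intros m Hm Hw; exact (Hmin (ex_intro _ m (conj Hm Hw))).
Qed.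

Lemma chain_snoc (s : list (world A)) x y :
  chain A (s ++ [x]) -> adj A x y -> chain A (s ++ [x; y]).
Proof.
  induction s as [|a s IH]; intros Hc Hxy; [simpl; tauto|].
  destruct s as [|b s]; [simpl in *; tauto|].
  destruct Hc as [Hab Hc]. split; [exact Hab|exact (IH Hc Hxy)].
Qed.

End Distance.

Lemma NoDup_cons_snoc {X : Type} (x y : X) s :
  NoDup s -> ~ In x s -> ~ In y s -> x <> y -> NoDup (x :: s ++ [y]).
Proof.
  intros Hs Hx Hy Hxy. constructor.
  - intro H; apply in_app_or in H as [H|[H|[]]]; auto.
  - apply NoDup_app; [exact Hs|repeat constructor; simpl; tauto|].
    intros a Ha [<-|[]]; contradiction.
Qed.

Section Tree.
Context {I J : Type} {A : Kripke I J} {r : world A} (TL : rooted_tree_like r).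

Lemma rel_dist_S i u v d : rel A i u v -> dist_is A d r u -> dist_is A (S d) r v.
Proof.
  intros H Hd. destruct TL as (_ & _ & Hdir). destruct (Hdir i u v H) as (n & Hn & Hn').
  rewrite (dist_is_unique A _ _ _ _ Hd Hn). exact Hn'.
Qed.

Lemma rel_dist_pred i u v d : rel A i u v -> dist_is A (S d) r v -> dist_is A d r u.
Proof.
  intros H Hd. destruct TL as (_ & _ & Hdir). destruct (Hdir i u v H) as (n & Hn & Hn').
  injection (dist_is_unique A _ _ _ _ Hd Hn') as ->. exact Hn.
Qed.

Lemma rel_irrefl i u : ~ rel A i u u.
Proof. intro H. destruct TL as (_ & [Hloop _] & _). apply (Hloop u). exists i; auto. Qed.

Lemma rel_agent_unique i j u v : rel A i u v -> rel A j u v -> i = j.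
Proof.
  intros H1 H2. destruct TL as (Hdisj & _ & _). apply NNPP; intro Hne.
  exact (Hdisj i j u v Hne (or_introl H1) (or_introl H2)).
Qed.

Lemma no_rel_to_root i p : ~ rel A i p r.
Proof.
  intro H. destruct TL as (_ & _ & Hdir). destruct (Hdir i p r H) as (n & _ & Hn).
  discriminate (dist_is_unique A _ _ _ _ Hn (dist_is_refl A r)).
Qed.

Lemma parent_exists d v : dist_is A (S d) r v -> exists i p, rel A i p v /\ dist_is A d r p.
Proof.
  intro Hv. destruct (within_S_inv A d r v (proj1 Hv)) as [<-|(y & Hy & i & [Hr|Hr])].
  - exfalso. apply (proj2 Hv 0); [lia|reflexivity].
  - exists i, y. split; [exact Hr|exact (rel_dist_pred i y v d Hr Hv)].
  - exfalso. apply (proj2 (rel_dist_S i v y (S d) Hr Hv) d); [lia|exact Hy].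
Qed.

Lemma path_same_depth n : forall u1 u2, dist_is A n r u1 -> dist_is A n r u2 -> u1 <> u2 ->
  exists s, NoDup (u1 :: s ++ [u2]) /\ chain A (u1 :: s ++ [u2]) /\
    forall x, In x s -> exists m, m < n /\ dist_is A m r x.
Proof.
  induction n as [|n IH]; intros u1 u2 H1 H2 Hne.
  - exfalso; apply Hne; rewrite <- (proj1 H1); exact (proj1 H2).
  - destruct (parent_exists n u1 H1) as (i1 & p1 & Hr1 & Hp1).
    destruct (parent_exists n u2 H2) as (i2 & p2 & Hr2 & Hp2).
    assert (Hdeep : forall x m, m < S n -> dist_is A m r x -> x <> u1 /\ x <> u2).
    { intros x m Hm Hx; split; intros ->;
        [pose proof (dist_is_unique A _ _ _ _ Hx H1)|pose proof (dist_is_unique A _ _ _ _ Hx H2)];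
        lia. }
    destruct (classic (p1 = p2)) as [<-|Hp].
    + exists [p1]. destruct (Hdeep p1 n (le_n _) Hp1) as [Hq1 Hq2]. split; [|split].
      * apply NoDup_cons_snoc; [repeat constructor; simpl; tauto|simpl; intuition congruence..].
      * repeat split; [exists i1|exists i2]; auto.
      * intros x [<-|[]]; exists n; auto.
    + destruct (IH p1 p2 Hp1 Hp2 Hp) as (s & Hnd & Hc & Hs).
      assert (Hsh : forall x, In x (p1 :: s ++ [p2]) -> exists m, m < S n /\ dist_is A m r x).
      { intros x [<-|Hx]; [exists n; auto|].
        apply in_app_or in Hx as [Hx|[<-|[]]]; [|exists n; auto].
        destruct (Hs x Hx) as (m & Hm & Hxm); exists m; split; [lia|exact Hxm]. }
      exists (p1 :: s ++ [p2]). split; [|split; [|exact Hsh]].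
      * apply NoDup_cons_snoc; [exact Hnd| | |exact Hne];
          intro Hin; destruct (Hsh _ Hin) as (m & Hm & Hxm); destruct (Hdeep _ _ Hm Hxm); auto.
      * split; [exists i1; auto|].
        replace ((p1 :: s ++ [p2]) ++ [u2]) with ((p1 :: s) ++ [p2; u2])
          by (simpl; rewrite <- app_assoc; reflexivity).
        apply chain_snoc; [exact Hc|exists i2; auto].
Qed.

(* Two distinct parents of v, joined through shallower vertices, would close a
   cycle through v. *)
Lemma parent_unique i j p q v : rel A i p v -> rel A j q v -> p = q.
Proof.
  intros Hp Hq. apply NNPP; intro Hne.
  destruct (proj2 (proj2 TL) i p v Hp) as (d & Hd & Hv).
  destruct (path_same_depth d p q Hd (rel_dist_pred j q v d Hq Hv) Hne) as (s & Hnd & Hc & Hs).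
  apply (proj2 (proj1 (proj2 TL)) (v :: p :: s ++ [q]) v q).
  - constructor; [|exact Hnd]. intros [Hvp|Hin].
    + subst p. pose proof (dist_is_unique A _ _ _ _ Hd Hv); lia.
    + apply in_app_or in Hin as [Hin|[Hin|[]]].
      * destruct (Hs v Hin) as (m & Hm & Hvm). pose proof (dist_is_unique A _ _ _ _ Hvm Hv); lia.
      * subst q; exact (rel_irrefl j v Hq).
  - simpl; rewrite length_app; simpl; lia.
  - split; [exists i; auto|exact Hc].
  - reflexivity.
  - change (last ((v :: p :: s) ++ [q]) v = q). apply last_last.
  - exists j; auto.
Qed.

End Tree.

Section Matching.
Context {I J : Type} (c l : nat).

Definition tree_of_height (A : Kripke I J) (r : world A) : Prop :=
  rooted_tree_like r /\ forall v, exists d, d <= l /\ dist_is A d r v.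

Definition extend {X Y : Type} (R : X -> Y -> Prop) (z : X) (z' : Y) : X -> Y -> Prop :=
  fun a b => R a b \/ (a = z /\ b = z').

Lemma flip_extend {X Y : Type} (R : X -> Y -> Prop) z z' :
  flip (extend R z z') = extend (flip R) z' z.
Proof.
  do 2 (apply functional_extensionality; intro).
  apply propositional_extensionality; unfold flip, extend; tauto.
Qed.

Lemma extend_unmatched_l {X Y : Type} (R : X -> Y -> Prop) z z' u :
  ~ (exists v, extend R z z' u v) <-> ~ (exists v, R u v) /\ u <> z.
Proof.
  unfold extend; split.
  - intro H; split; [intros (v & Hv); apply H; exists v; left; exact Hv|].
    intros ->; apply H; exists z'; right; auto.
  - intros [H Hu] (v & [Hv|[-> _]]); [apply H; exists v; exact Hv|exact (Hu eq_refl)].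
Qed.

Lemma extend_unmatched_r {X Y : Type} (R : X -> Y -> Prop) z z' u :
  ~ (exists v, extend R z z' v u) <-> ~ (exists v, R v u) /\ u <> z'.
Proof. rewrite <- (extend_unmatched_l (flip R) z' z u), <- flip_extend. reflexivity. Qed.

Definition counts_agree (A B : Kripke I J) (R : world A -> world B -> Prop) x y n t : Prop :=
  forall i m (w : world A), m <= t ->
    at_least (fun u => rel A i x u /\ ~ (exists v, R u v) /\ winII A A c n w u) m <->
    at_least (fun u' => rel B i y u' /\ ~ (exists v, R v u') /\ winII A B c n w u') m.

Definition half_matching (A B : Kripke I J) ra rb (R : world A -> world B -> Prop) t : Prop :=
  (forall x y y', R x y -> R x y' -> y = y') /\
  R ra rb /\
  (forall x y i p, R x y -> rel A i p x -> exists p', R p p') /\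
  (forall x y, R x y -> exists d, dist_is A d ra x /\ dist_is B d rb y /\
     winII A B c (l - d) x y /\ counts_agree A B R x y (l - S d) t) /\
  (forall x y u v i, R x y -> R u v -> rel A i x u -> rel B i y v).

Definition matching (A B : Kripke I J) ra rb R t : Prop :=
  half_matching A B ra rb R t /\ half_matching B A rb ra (flip R) t.

Lemma matching_related {A B : Kripke I J} {ra rb R t} x y :
  matching A B ra rb R t -> R x y ->
  exists d, dist_is A d ra x /\ dist_is B d rb y /\
    winII A B c (l - d) x y /\ counts_agree A B R x y (l - S d) t.
Proof. intros [(_ & _ & _ & H & _) _]; exact (H x y). Qed.

Lemma matching_flip {A B : Kripke I J} {ra rb R t} :
  matching A B ra rb R t -> matching B A rb ra (flip R) t.
Proof. intros [H1 H2]; split; [exact H2|exact H1]. Qed.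

Lemma half_matching_mono {A B : Kripke I J} {ra rb R} t t' :
  t <= t' -> half_matching A B ra rb R t' -> half_matching A B ra rb R t.
Proof.
  intros Ht (H1 & H2 & H3 & H4 & H5).
  split; [exact H1|split; [exact H2|split; [exact H3|split; [|exact H5]]]].
  intros x y Hxy; destruct (H4 x y Hxy) as (d & Hx & Hy & Hw & Hcnt).
  exists d; split; [exact Hx|split; [exact Hy|split; [exact Hw|]]].
  intros i m w Hm; apply Hcnt; lia.
Qed.

Lemma matching_mono {A B : Kripke I J} {ra rb R} t t' :
  t <= t' -> matching A B ra rb R t' -> matching A B ra rb R t.
Proof. intros Ht [H1 H2]; split; apply (half_matching_mono t t'); assumption. Qed.

Lemma tree_of_height_leaf {A : Kripke I J} {r} (T : tree_of_height A r) d x i u :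
  l <= d -> dist_is A d r x -> ~ rel A i x u.
Proof.
  intros Hl Hd Hr. destruct T as [TL Hheight].
  destruct (Hheight u) as (d' & Hd' & Hu).
  pose proof (dist_is_unique A _ _ _ _ (rel_dist_S TL i x u d Hr Hd) Hu). lia.
Qed.

Lemma counts_agree_unmatched {A B : Kripke I J} {ra rb}
  (TA : tree_of_height A ra) (TB : tree_of_height B rb) R x y d t :
  dist_is A d ra x -> dist_is B d rb y -> winII A B c (l - d) x y -> t <= c ->
  (forall i u, rel A i x u -> ~ exists v, R u v) ->
  (forall i u', rel B i y u' -> ~ exists v, R v u') ->
  counts_agree A B R x y (l - S d) t.
Proof.
  intros Hx Hy Hw Ht Fx Fy i m w Hm.
  destruct (le_lt_dec (S d) l) as [Hle|Hlt].
  - replace (l - d) with (S (l - S d)) in Hw by lia.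
    rewrite (at_least_iff _ (fun u => rel A i x u /\ winII A A c (l - S d) w u));
      [|intro u; split; [tauto|intros [H1 H2]; repeat split; auto; exact (Fx i u H1)]].
    rewrite (at_least_iff _ (fun u => rel B i y u /\ winII A B c (l - S d) w u));
      [|intro u; split; [tauto|intros [H1 H2]; repeat split; auto; exact (Fy i u H1)]].
    apply winII_child_count; [exact Hw|lia].
  - destruct m as [|m]; [split; intros; apply at_least_0|].
    split; intros ([|u s] & _ & Hl & Hs); try discriminate;
      destruct (Hs u (or_introl eq_refl)) as [Hr _]; exfalso.
    + exact (tree_of_height_leaf TA d x i u ltac:(lia) Hx Hr).
    + exact (tree_of_height_leaf TB d y i u ltac:(lia) Hy Hr).
Qed.

(* The new pair (z, z') only changes the counts of its parents p, p', and there
   it removes one vertex on each side of the same game class. *)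
Lemma counts_agree_extend {A B : Kripke I J} {ra rb}
  (TA : rooted_tree_like ra) (TB : rooted_tree_like rb) R t p p' z z' i dp x y d :
  matching A B ra rb R (S t) -> R p p' -> dist_is A dp ra p ->
  rel A i p z -> rel B i p' z' -> ~ (exists v, R z v) -> ~ (exists v, R v z') ->
  winII A B c (l - S dp) z z' ->
  R x y -> dist_is A d ra x -> counts_agree A B R x y (l - S d) (S t) ->
  counts_agree A B (extend R z z') x y (l - S d) t.
Proof.
  intros [(F & _) (F' & _)] Hpp Hdp Hz Hz' Fz Fz' Hw Hxy Hd Hcnt j m w Hm.
  set (P := fun u => rel A j x u /\ ~ (exists v, R u v) /\ winII A A c (l - S d) w u).
  set (Q := fun u' => rel B j y u' /\ ~ (exists v, R v u') /\ winII A B c (l - S d) w u').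
  rewrite (at_least_iff _ (fun u => P u /\ u <> z) m)
    by (intro u; unfold P; rewrite extend_unmatched_l; tauto).
  rewrite (at_least_iff _ (fun u => Q u /\ u <> z') m)
    by (intro u; unfold Q; rewrite extend_unmatched_r; tauto).
  assert (HPQ : P z <-> Q z').
  { unfold P, Q; split; intros (H1 & _ & H3).
    - pose proof (parent_unique TA j i x p z H1 Hz) as ->.
      pose proof (rel_agent_unique TA j i p z H1 Hz) as ->.
      rewrite (F _ _ _ Hxy Hpp); pose proof (dist_is_unique A _ _ _ _ Hd Hdp) as ->.
      split; [exact Hz'|split; [exact Fz'|exact (winII_trans H3 Hw)]].
    - pose proof (parent_unique TB j i y p' z' H1 Hz') as ->.
      pose proof (rel_agent_unique TB j i p' z' H1 Hz') as ->.
      pose proof (F' _ _ _ Hxy Hpp) as ->; pose proof (dist_is_unique A _ _ _ _ Hd Hdp) as ->.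
      split; [exact Hz|split; [exact Fz|exact (winII_trans H3 (winII_sym Hw))]]. }
  destruct (classic (P z)) as [HPz|HPz].
  - rewrite (at_least_S P z m HPz), (at_least_S Q z' m (proj1 HPQ HPz)). apply Hcnt; lia.
  - rewrite (at_least_without P z m HPz), (at_least_without Q z' m (fun H => HPz (proj2 HPQ H))).
    apply Hcnt; lia.
Qed.

Lemma half_matching_extend {A B : Kripke I J} {ra rb}
  (TA : tree_of_height A ra) (TB : tree_of_height B rb) R t p p' z z' i dp :
  matching A B ra rb R (S t) -> t <= c -> R p p' ->
  dist_is A dp ra p -> dist_is B dp rb p' -> rel A i p z -> rel B i p' z' ->
  ~ (exists v, R z v) -> ~ (exists v, R v z') -> winII A B c (l - S dp) z z' ->
  half_matching A B ra rb (extend R z z') t.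
Proof.
  intros HR Ht Hpp Hdp Hdp' Hz Hz' Fz Fz' Hw.
  pose proof HR as [(F & Hroot & Hpar & Hdata & Hedge) (_ & _ & Hpar' & _ & _)].
  pose proof (proj1 TA) as TLA; pose proof (proj1 TB) as TLB.
  split; [|split; [|split; [|split]]].
  - intros x y y2 [H|[-> ->]] [H'|[Hx ->]]; [eauto| |exfalso; apply Fz; eauto|reflexivity].
    subst x; exfalso; apply Fz; eauto.
  - left; exact Hroot.
  - intros x y j q [H|[-> ->]] Hq.
    + destruct (Hpar x y j q H Hq) as (q' & Hq'). exists q'; left; exact Hq'.
    + rewrite (parent_unique TLA j i q p z Hq Hz). exists p'; left; exact Hpp.
  - intros x y [H|[-> ->]].
    + destruct (Hdata x y H) as (d & Hd & Hd' & Hwx & Hcnt).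
      exists d; split; [exact Hd|split; [exact Hd'|split; [exact Hwx|]]].
      exact (counts_agree_extend TLA TLB R t p p' z z' i dp x y d
               HR Hpp Hdp Hz Hz' Fz Fz' Hw H Hd Hcnt).
    + exists (S dp).
      pose proof (rel_dist_S TLA i p z dp Hz Hdp) as Hdz.
      pose proof (rel_dist_S TLB i p' z' dp Hz' Hdp') as Hdz'.
      split; [exact Hdz|split; [exact Hdz'|split; [exact Hw|]]].
      apply (counts_agree_unmatched TA TB _ z z' (S dp) t Hdz Hdz' Hw Ht).
      * intros j u Hu (v & [Hv|[-> _]]); [|exact (rel_irrefl TLA j z Hu)].
        destruct (Hpar u v j z Hv Hu) as (q & Hq). apply Fz; eauto.
      * intros j u Hu (v & [Hv|[_ ->]]); [|exact (rel_irrefl TLB j z' Hu)].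
        destruct (Hpar' u v j z' Hv Hu) as (q & Hq). apply Fz'; exists q; exact Hq.
  - intros x y u v j [H|[-> ->]] [H'|[-> ->]] Hr.
    + eauto.
    + pose proof (parent_unique TLA j i x p z Hr Hz) as ->.
      pose proof (rel_agent_unique TLA j i p z Hr Hz) as ->.
      rewrite (F _ _ _ H Hpp). exact Hz'.
    + destruct (Hpar u v j z H' Hr) as (q & Hq). exfalso; apply Fz; eauto.
    + exfalso; exact (rel_irrefl TLA j z Hr).
Qed.

Lemma matching_extend_child {A B : Kripke I J} {ra rb}
  (TA : tree_of_height A ra) (TB : tree_of_height B rb) R t p p' i z :
  matching A B ra rb R (S t) -> t <= c -> R p p' -> rel A i p z -> ~ (exists v, R z v) ->
  exists z', matching A B ra rb (extend R z z') t.
Proof.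
  intros HR Ht Hpp Hz Fz.
  destruct (matching_related p p' HR Hpp) as (dp & Hdp & Hdp' & _ & Hcnt).
  (* Counting the class of z itself, with cap 1, yields the partner z'. *)
  destruct (proj1 (Hcnt i 1 z ltac:(lia))) as ([|z' s] & _ & Hl & Hs); [|discriminate|].
  { exists [z]; split; [repeat constructor; simpl; tauto|split; [reflexivity|]].
    intros v [<-|[]]; split; [exact Hz|split; [exact Fz|apply winII_refl]]. }
  destruct (Hs z' (or_introl eq_refl)) as (Hz' & Fz' & Hw).
  exists z'; split.
  - exact (half_matching_extend TA TB R t p p' z z' i dp HR Ht Hpp Hdp Hdp' Hz Hz' Fz Fz' Hw).
  - rewrite flip_extend.
    exact (half_matching_extend TB TA (flip R) t p' p z' z i dp (matching_flip HR) Ht Hpp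
             Hdp' Hdp Hz' Hz Fz' Fz (winII_sym Hw)).
Qed.

Lemma matching_extend {A B : Kripke I J} {ra rb}
  (TA : tree_of_height A ra) (TB : tree_of_height B rb) :
  forall d t R a, t + d <= c -> dist_is A d ra a -> matching A B ra rb R (t + d) ->
  exists R' a', (forall x y, R x y -> R' x y) /\ R' a a' /\ matching A B ra rb R' t.
Proof.
  induction d as [|d IH]; intros t R a Hc Hd HR.
  - rewrite Nat.add_0_r in HR. rewrite <- (proj1 Hd).
    exists R, rb. split; [auto|split; [exact (proj1 (proj2 (proj1 HR)))|exact HR]].
  - destruct (parent_exists (proj1 TA) d a Hd) as (i & p & Hr & Hp).
    rewrite <- Nat.add_succ_comm in HR.
    destruct (IH (S t) R p ltac:(lia) Hp HR) as (R1 & p' & Hsub & Hpp & HR1).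
    destruct (classic (exists v, R1 a v)) as [(a' & Ha')|Fa].
    + exists R1, a'.
      split; [exact Hsub|split; [exact Ha'|exact (matching_mono t (S t) ltac:(lia) HR1)]].
    + destruct (matching_extend_child TA TB R1 t p p' i a HR1 ltac:(lia) Hpp Hr Fa) as (a' & HR2).
      exists (extend R1 a a'), a'. split; [intros x y H; left; auto|split; [right; auto|exact HR2]].
Qed.

Lemma matching_forth {A B : Kripke I J} {ra rb}
  (TA : tree_of_height A ra) (TB : tree_of_height B rb) k R :
  S k * l <= c -> matching A B ra rb R (S k * l) ->
  forall a, exists R' a', (forall x y, R x y -> R' x y) /\ R' a a' /\ matching A B ra rb R' (k * l).
Proof.
  intros Hc HR a. destruct (proj2 TA a) as (d & Hd & Ha).
  apply (matching_extend TA TB d); [simpl in Hc; lia|exact Ha|].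
  apply (matching_mono _ (S k * l)); [simpl; lia|exact HR].
Qed.

Lemma matching_back {A B : Kripke I J} {ra rb}
  (TA : tree_of_height A ra) (TB : tree_of_height B rb) k R :
  S k * l <= c -> matching A B ra rb R (S k * l) ->
  forall b, exists R' a, (forall x y, R x y -> R' x y) /\ R' a b /\ matching A B ra rb R' (k * l).
Proof.
  intros Hc HR b.
  destruct (matching_forth TB TA k (flip R) Hc (matching_flip HR) b) as (R' & a & Hsub & Hba & HR').
  exists (flip R'), a.
  split; [intros x y H; exact (Hsub y x H)|split; [exact Hba|exact (matching_flip HR')]].
Qed.

Lemma half_matching_root {A B : Kripke I J} {ra rb}
  (TA : tree_of_height A ra) (TB : tree_of_height B rb) R t :
  (forall a b, R a b <-> a = ra /\ b = rb) -> winII A B c l ra rb -> t <= c ->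
  half_matching A B ra rb R t.
Proof.
  intros HR Hw Ht. pose proof (proj1 TA) as TLA; pose proof (proj1 TB) as TLB.
  split; [|split; [|split; [|split]]].
  - intros x y y' H1 H2. apply HR in H1, H2. destruct H1, H2; congruence.
  - apply HR; auto.
  - intros x y i p H Hp. apply HR in H as [-> _]. exfalso; exact (no_rel_to_root TLA i p Hp).
  - intros x y H. apply HR in H as [-> ->]. exists 0.
    split; [apply dist_is_refl|split; [apply dist_is_refl|]].
    rewrite Nat.sub_0_r. split; [exact Hw|].
    apply (counts_agree_unmatched TA TB R ra rb 0 t (dist_is_refl A ra) (dist_is_refl B rb));
      [rewrite Nat.sub_0_r; exact Hw|exact Ht| |].
    + intros i u Hu (v & Hv). apply HR in Hv as [-> _]. exact (rel_irrefl TLA i ra Hu).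
    + intros i u Hu (v & Hv). apply HR in Hv as [_ ->]. exact (rel_irrefl TLB i rb Hu).
  - intros x y u v i H1 H2 Hr. apply HR in H1 as [-> _], H2 as [-> _].
    exfalso; exact (rel_irrefl TLA i ra Hr).
Qed.

End Matching.

Lemma upd_related {X Y : Type} (R : X -> Y -> Prop) (rho : nat -> X) (rho' : nat -> Y) n a a' :
  (forall v, R (rho v) (rho' v)) -> R a a' -> forall v, R (upd rho n a v) (upd rho' n a' v).
Proof. intros H Ha v. unfold upd. destruct (Nat.eqb v n); auto. Qed.

Lemma sat_matching {I J : Type} c l {A B : Kripke I J} {ra rb}
  (TA : tree_of_height l A ra) (TB : tree_of_height l B rb) :
  forall f k R rho rho', qrank f <= k -> k * l <= c -> matching c l A B ra rb R (k * l) ->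
  (forall v, R (rho v) (rho' v)) -> (sat A rho f <-> sat B rho' f).
Proof.
  induction f as [a b|i a b|j a| |f IH|f IH g IH'|f IH g IH'|f IH g IH'|x f IH|x f IH];
    intros k R rho rho' Hq Hc HR Hrel; simpl in *.
  6-8: rewrite (IH k R rho rho' ltac:(lia) Hc HR Hrel), (IH' k R rho rho' ltac:(lia) Hc HR Hrel);
    tauto.
  - destruct HR as ((F & _) & (F' & _)). split; intro E.
    + pose proof (Hrel a) as Ha. rewrite E in Ha. exact (F _ _ _ Ha (Hrel b)).
    + pose proof (Hrel a) as Ha. rewrite E in Ha. exact (F' _ _ _ Ha (Hrel b)).
  - destruct HR as ((_ & _ & _ & _ & E) & (_ & _ & _ & _ & E')).
    split; [exact (E _ _ _ _ _ (Hrel a) (Hrel b))|exact (E' _ _ _ _ _ (Hrel a) (Hrel b))].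
  - destruct (matching_related c l _ _ HR (Hrel a)) as (d & _ & _ & Hw & _).
    exact (winII_atom_eq Hw j).
  - tauto.
  - rewrite (IH k R rho rho' Hq Hc HR Hrel). tauto.
  - destruct k as [|k]; [lia|]. split.
    + intros (a & Ha).
      destruct (matching_forth c l TA TB k R Hc HR a) as (R' & a' & Hsub & Ha' & HR').
      exists a'. refine (proj1 (IH k R' _ _ ltac:(lia) ltac:(simpl in Hc; lia) HR' _) Ha).
      exact (upd_related R' rho rho' x a a' (fun v => Hsub _ _ (Hrel v)) Ha').
    + intros (a' & Ha').
      destruct (matching_back c l TA TB k R Hc HR a') as (R' & a & Hsub & Ha & HR').
      exists a. refine (proj2 (IH k R' _ _ ltac:(lia) ltac:(simpl in Hc; lia) HR' _) Ha').
      exact (upd_related R' rho rho' x a a' (fun v => Hsub _ _ (Hrel v)) Ha).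
  - destruct k as [|k]; [lia|]. split.
    + intros H a'.
      destruct (matching_back c l TA TB k R Hc HR a') as (R' & a & Hsub & Ha & HR').
      refine (proj1 (IH k R' _ _ ltac:(lia) ltac:(simpl in Hc; lia) HR' _) (H a)).
      exact (upd_related R' rho rho' x a a' (fun v => Hsub _ _ (Hrel v)) Ha).
    + intros H a.
      destruct (matching_forth c l TA TB k R Hc HR a) as (R' & a' & Hsub & Ha' & HR').
      refine (proj2 (IH k R' _ _ ltac:(lia) ltac:(simpl in Hc; lia) HR' _) (H a')).
      exact (upd_related R' rho rho' x a a' (fun v => Hsub _ _ (Hrel v)) Ha').
Qed.

Lemma fo_equiv_of_winII {I J : Type} l {A B : Kripke I J} {ra rb}
  (TA : tree_of_height l A ra) (TB : tree_of_height l B rb) q :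
  winII A B (q * l) l ra rb -> fo_equiv q ra rb.
Proof.
  intros Hw f Hq _.
  set (R0 := fun (a : world A) (b : world B) => a = ra /\ b = rb).
  apply (sat_matching (q * l) l TA TB f q R0); [exact Hq|lia| |intro; split; reflexivity].
  split.
  - apply (half_matching_root _ _ TA TB); [unfold R0; tauto|exact Hw|lia].
  - apply (half_matching_root _ _ TB TA); [unfold flip, R0; tauto|exact (winII_sym Hw)|lia].
Qed.

Lemma within_restrict {I J : Type} (M : Kripke I J) l w : forall n (u v : world M),
  within M n u v -> forall k, within M k w u -> k + n <= l -> forall hu hv,
  within (restrict M l w) n (exist _ u hu) (exist _ v hv).
Proof.
  induction n as [|n IH]; intros u v H k Hk Hkn hu hv.
  - simpl in H; subst v. simpl. f_equal. apply proof_irrelevance.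
  - destruct H as [<-|(z & Hz & Hw)]; [left; f_equal; apply proof_irrelevance|].
    assert (Hwz : within M (S k) w z) by exact (within_snoc M k w u z Hk Hz).
    assert (hz : within M l w z) by (apply (within_mono M (S k)); [lia|exact Hwz]).
    right. exists (exist _ z hz). split.
    + destruct Hz as (i & Hi). exists i. exact Hi.
    + exact (IH z v Hw (S k) Hwz ltac:(lia) hz hv).
Qed.

Lemma restrict_tree_of_height {I J : Type} (M : Kripke I J) l w :
  rooted_tree_like (root M l w) -> tree_of_height l (restrict M l w) (root M l w).
Proof.
  intro T; split; [exact T|]. intros [v hv].
  pose proof (within_restrict M l w l w v hv 0 (eq_refl) ltac:(lia) (within_refl M l w) hv) as H.
  destruct (within_dist_is _ _ _ _ H) as (d & Hd & Hdd). exists d; split; [exact Hd|exact Hdd].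
Qed.

Theorem mainTheorem8 :
  forall (I J : Type), Finite I -> Finite J ->
  forall q l : nat, exists c : nat,
  forall (M M' : Kripke I J) (w : world M) (w' : world M'),
    rooted_tree_like (root M l w) ->
    rooted_tree_like (root M' l w') ->
    game_equiv c l (root M l w) (root M' l w') ->
    fo_equiv q (root M l w) (root M' l w').
Proof.
  (* The bound does not depend on the signature. *)
  intros I J _ _ q l. exists (q * l). intros M M' w w' T T' G.
  exact (fo_equiv_of_winII l (restrict_tree_of_height M l w T)
           (restrict_tree_of_height M' l w' T') q G).
Qed.
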